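(* Let $G$ be a $B_2$-EPG graph given with a representation and let $X$ be a clique of $G$. Then either there is a set of at most three rows such that every U-vertex of $X$ intersects one of these rows, or there is a set of at most three columns such that every Z-vertex of $X$ intersects one of these columns.
   Context: A graph $G$ is a $B_k$-EPG graph if each vertex $u$ can be assigned a path $P_u$ in the planar orthogonal grid with at most $k$ bends such that $uv\in E(G)$ iff $P_u$ and $P_v$ share at least one grid edge (a representation); for $B_2$-EPG graphs one assumes w.l.o.g. every path has exactly two bends, so every vertex is a Z-vertex or a U-vertex. A vertex $u$ intersects a row (column) if $P_u$ contains a grid edge of it. A Z-vertex intersects exactly two rows and one column; a U-vertex intersects exactly one row and two columns. *)

From HB Require Import structures.
From mathcomp Require Import all_boot all_order all_algebra.
Set Implicit Arguments. Unset Strict Implicit. Unset Printing Implicit Defensive.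
Import Order.TTheory GRing.Theory Num.Theory.
Local Open Scope ring_scope.

(* Grid edges of the planar orthogonal grid Z x Z:
   HE x y = horizontal edge from (x,y) to (x+1,y)  (lies in row y);
   VE x y = vertical edge from (x,y) to (x,y+1)    (lies in column x). *)
Inductive gedge := HE (x y : int) | VE (x y : int).

Definition in_hseg (r a b : int) (e : gedge) : Prop :=
  match e with
  | HE x y => y = r /\ Num.min a b <= x /\ x < Num.max a b
  | VE _ _ => False
  end.

Definition in_vseg (c a b : int) (e : gedge) : Prop :=
  match e with
  | VE x y => x = c /\ Num.min a b <= y /\ y < Num.max a b
  | HE _ _ => False
  end.

(* Paths with exactly two bends (three nonempty maximal segments, alternating).
   ZPath y1 y2 x a b : horizontal (row y1, from column a to x), vertical
     (column x, from row y1 to y2), horizontal (row y2, from column x to b);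
     it intersects two rows and one column.
   UPath x1 x2 y a b : vertical (column x1, from row a to y), horizontal
     (row y, from column x1 to x2), vertical (column x2, from row y to b);
     it intersects one row and two columns. *)
Inductive path2 :=
  | ZPath (y1 y2 x a b : int)
  | UPath (x1 x2 y a b : int).

(* every segment has positive length, so there are exactly two bends *)
Definition valid_path2 (p : path2) : Prop :=
  match p with
  | ZPath y1 y2 x a b => a <> x /\ y1 <> y2 /\ b <> x
  | UPath x1 x2 y a b => a <> y /\ x1 <> x2 /\ b <> y
  end.

Definition path_edge (p : path2) (e : gedge) : Prop :=
  match p with
  | ZPath y1 y2 x a b => in_hseg y1 a x e \/ in_vseg x y1 y2 e \/ in_hseg y2 x b e
  | UPath x1 x2 y a b => in_vseg x1 a y e \/ in_hseg y x1 x2 e \/ in_vseg x2 y b e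
  end.

Definition share_edge (p q : path2) : Prop :=
  exists e, path_edge p e /\ path_edge q e.

Definition intersects_row (p : path2) (r : int) : Prop :=
  exists x, path_edge p (HE x r).

Definition intersects_col (p : path2) (c : int) : Prop :=
  exists y, path_edge p (VE c y).

Definition is_Zpath (p : path2) : bool := if p is ZPath _ _ _ _ _ then true else false.
Definition is_Upath (p : path2) : bool := if p is UPath _ _ _ _ _ then true else false.

Definition B2EPG_rep (V : finType) (adj : rel V) (P : V -> path2) : Prop :=
  (forall u, valid_path2 (P u)) /\
  (forall u v, u != v -> (adj u v <-> share_edge (P u) (P v))).

Definition simple_graph (V : finType) (adj : rel V) : Prop :=
  irreflexive adj /\ symmetric adj.

Definition is_clique (V : finType) (adj : rel V) (X : {set V}) : Prop :=
  forall u v, u \in X -> v \in X -> u != v -> adj u v.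

From HB Require Import structures.
From mathcomp Require Import all_boot all_order all_algebra.
Import Order.TTheory GRing.Theory Num.Theory.
Local Open Scope ring_scope.
From Stdlib Require Import Classical.

(* If the Z-vertices of X use at most three columns, these columns will do.
   Otherwise take Z-vertices z1, ..., z4 of X with pairwise distinct columns.
   Two Z-paths in different columns can only share a horizontal edge, so z1
   shares a row with each of z2, z3, z4.  A U-path shares an edge with every
   z_i, on its own row or on one of its two columns; as the columns of the
   z_i are distinct, its row is a row of at least two of the z_i.  Since the
   two rows of each z_i meet those of z1, at most one row outside the two rows
   of z1 is common to two of z2, z3, z4: these three rows cover the U-vertices. *)

Lemma few_values_or_four_distinct {I : finType} {T : eqType} (A : pred I) (f : I -> T) :
  (exists s : seq T, (size s <= 3)%N /\ forall i, A i -> f i \in s) \/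
  exists i1 i2 i3 i4, [/\ A i1, A i2, A i3, A i4 & uniq [:: f i1; f i2; f i3; f i4]].
Proof.
pose s := undup [seq f i | i <- enum A].
have preim t : t \in s -> exists2 i, A i & f i = t.
  by rewrite mem_undup => /mapP[i]; rewrite mem_enum => Ai ->; exists i.
have [small|] := leqP (size s) 3.
  by left; exists s; split=> // i Ai; rewrite mem_undup map_f ?mem_enum.
have : uniq s := undup_uniq _.
case: s preim => [|t1 [|t2 [|t3 [|t4 r]]]] preim /(take_uniq 4) ut //= _.
rewrite [take _ _]/= take0 in ut.
have [i1 A1 ?] : exists2 i, A i & f i = t1 by apply: preim; rewrite !inE eqxx.
have [i2 A2 ?] : exists2 i, A i & f i = t2 by apply: preim; rewrite !inE eqxx ?orbT.
have [i3 A3 ?] : exists2 i, A i & f i = t3 by apply: preim; rewrite !inE eqxx ?orbT.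
have [i4 A4 ?] : exists2 i, A i & f i = t4 by apply: preim; rewrite !inE eqxx ?orbT.
by subst; right; exists i1, i2, i3, i4.
Qed.

Definition in_pair (y a b : int) : Prop := y = a \/ y = b.

Definition in_two_pairs (y a2 b2 a3 b3 a4 b4 : int) : Prop :=
  (in_pair y a2 b2 /\ in_pair y a3 b3) \/ (in_pair y a2 b2 /\ in_pair y a4 b4) \/
  (in_pair y a3 b3 /\ in_pair y a4 b4).

Lemma two_columns_pigeonhole {y x1 x2 c1 c2 c3 c4 a1 b1 a2 b2 a3 b3 a4 b4 : int} :
  uniq [:: c1; c2; c3; c4] -> ~ in_pair y a1 b1 ->
  in_pair y a1 b1 \/ in_pair c1 x1 x2 -> in_pair y a2 b2 \/ in_pair c2 x1 x2 ->
  in_pair y a3 b3 \/ in_pair c3 x1 x2 -> in_pair y a4 b4 \/ in_pair c4 x1 x2 ->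
  in_two_pairs y a2 b2 a3 b3 a4 b4.
Proof.
rewrite /= !inE !negb_or.
move=> /and4P[/and3P[/eqP d12 /eqP d13 /eqP d14] /andP[/eqP d23 /eqP d24] /eqP d34 _].
move=> y1 [//|h1] h2 h3 h4; rewrite /in_two_pairs.
case: h1 => e1; case: h2 => [h2|[] e2]; case: h3 => [h3|[] e3];
  case: h4 => [h4|[] e4]; subst; try congruence; tauto.
Qed.

Lemma in_pair_outside_meet_unique {y c a b a' b' : int} :
  ~ in_pair y a b -> ~ in_pair c a b -> (exists2 p, in_pair p a b & in_pair p a' b') ->
  in_pair y a' b' -> in_pair c a' b' -> y = c.
Proof.
rewrite /in_pair => hy hc [p hp hp'] hy' hc'.
by case: hp => ?; case: hp' => ?; case: hy' => ?; case: hc' => ?; subst; intuition.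
Qed.

Lemma rows_shared_outside_first_pair {a1 b1 a2 b2 a3 b3 a4 b4 : int} :
  (exists2 p, in_pair p a1 b1 & in_pair p a2 b2) ->
  (exists2 p, in_pair p a1 b1 & in_pair p a3 b3) ->
  (exists2 p, in_pair p a1 b1 & in_pair p a4 b4) ->
  exists c, forall y, in_two_pairs y a2 b2 a3 b3 a4 b4 -> in_pair y a1 b1 \/ y = c.
Proof.
move=> m2 m3 m4.
have [[c [c1 hc]] | none] :=
  classic (exists c, ~ in_pair c a1 b1 /\ in_two_pairs c a2 b2 a3 b3 a4 b4).
- exists c => y hy; have [|y1] := classic (in_pair y a1 b1); [by left | right].
  have u2 := in_pair_outside_meet_unique y1 c1 m2; have u3 := in_pair_outside_meet_unique y1 c1 m3.
  have u4 := in_pair_outside_meet_unique y1 c1 m4.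
  by case: hy => [[? ?]|[[? ?]|[? ?]]]; case: hc => [[? ?]|[[? ?]|[? ?]]];
    first [by apply: u2 | by apply: u3 | by apply: u4].
- exists 0 => y hy; left; apply: NNPP => y1; exact: none (ex_intro _ y (conj y1 hy)).
Qed.

Lemma min_lt_max (a b : int) : a <> b -> Num.min a b < Num.max a b.
Proof. by rewrite lt_max !gt_min !ltxx orbF orbC -neq_lt => /eqP. Qed.

(* [0] is a junk value on U-paths. *)
Definition zcol (p : path2) : int := if p is ZPath _ _ x _ _ then x else 0.

Lemma intersects_col_zcol (p : path2) :
  valid_path2 p -> is_Zpath p -> intersects_col p (zcol p).
Proof.
case: p => //= y1 y2 x a b [_ [ne _]] _.
by exists (Num.min y1 y2); right; left; rewrite /= lexx min_lt_max.
Qed.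

Lemma intersects_row_UPath (x1 x2 y a b : int) :
  valid_path2 (UPath x1 x2 y a b) -> intersects_row (UPath x1 x2 y a b) y.
Proof.
by move=> [_ [ne _]]; exists (Num.min x1 x2); right; left; rewrite /= lexx min_lt_max.
Qed.

Lemma intersects_row_ZPathP (y1 y2 x a b r : int) :
  intersects_row (ZPath y1 y2 x a b) r -> in_pair r y1 y2.
Proof. by case=> ? /= [[-> _]|[[]|[-> _]]]; [left|right]. Qed.

Lemma intersects_col_ZPathP (y1 y2 x a b c : int) :
  intersects_col (ZPath y1 y2 x a b) c -> c = x.
Proof. by case=> ? /= [[]|[[-> _]|[]]]. Qed.

Lemma intersects_row_UPathP (x1 x2 y a b r : int) :
  intersects_row (UPath x1 x2 y a b) r -> r = y.
Proof. by case=> ? /= [[]|[[-> _]|[]]]. Qed.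

Lemma intersects_col_UPathP (x1 x2 y a b c : int) :
  intersects_col (UPath x1 x2 y a b) c -> in_pair c x1 x2.
Proof. by case=> ? /= [[-> _]|[[]|[-> _]]]; [left|right]. Qed.

Lemma share_edge_row_or_col (p q : path2) : share_edge p q ->
  (exists r, intersects_row p r /\ intersects_row q r) \/
  (exists c, intersects_col p c /\ intersects_col q c).
Proof.
case=> [[x y|x y] [hp hq]]; [left; exists y | right; exists x].
  by split; exists x.
by split; exists y.
Qed.

Lemma share_edge_ZPath_ZPath {y1 y2 x a b y1' y2' x' a' b' : int} : x <> x' ->
  share_edge (ZPath y1 y2 x a b) (ZPath y1' y2' x' a' b') ->
  exists2 r, in_pair r y1 y2 & in_pair r y1' y2'.
Proof.
move=> neq /share_edge_row_or_col[[r [/intersects_row_ZPathP ? /intersects_row_ZPathP ?]]|].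
  by exists r.
by case=> c [/intersects_col_ZPathP -> /intersects_col_ZPathP].
Qed.

Lemma share_edge_UPath_ZPath (x1 x2 y a b y1 y2 x a' b' : int) :
  share_edge (UPath x1 x2 y a b) (ZPath y1 y2 x a' b') ->
  in_pair y y1 y2 \/ in_pair x x1 x2.
Proof.
case/share_edge_row_or_col=> [[r [/intersects_row_UPathP -> /intersects_row_ZPathP]]|[c]].
  by left.
by case=> /intersects_col_UPathP + /intersects_col_ZPathP <-; right.
Qed.

Lemma rows_meeting_four_ZPaths {p1 p2 p3 p4 : path2} :
  is_Zpath p1 -> is_Zpath p2 -> is_Zpath p3 -> is_Zpath p4 ->
  uniq [:: zcol p1; zcol p2; zcol p3; zcol p4] ->
  share_edge p1 p2 -> share_edge p1 p3 -> share_edge p1 p4 ->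
  exists rows : seq int, (size rows <= 3)%N /\
    forall q, valid_path2 q -> is_Upath q ->
      share_edge q p1 -> share_edge q p2 -> share_edge q p3 -> share_edge q p4 ->
      exists2 r, r \in rows & intersects_row q r.
Proof.
case: p1 p2 p3 p4 => [y1 y1' x1 a1 b1|//] [y2 y2' x2 a2 b2|//] [y3 y3' x3 a3 b3|//]
  [y4 y4' x4 a4 b4|//] _ _ _ _ /= cols s12 s13 s14.
have [/eqP d12 /eqP d13 /eqP d14] : [/\ x1 != x2, x1 != x3 & x1 != x4].
  by case/andP: cols; rewrite !inE !negb_or => /and3P[].
have [c hc] := rows_shared_outside_first_pair (share_edge_ZPath_ZPath d12 s12)
  (share_edge_ZPath_ZPath d13 s13) (share_edge_ZPath_ZPath d14 s14).
exists [:: y1; y1'; c]; split=> // -[//|ux1 ux2 uy ua ub] valid _.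
move=> /share_edge_UPath_ZPath t1 /share_edge_UPath_ZPath t2.
move=> /share_edge_UPath_ZPath t3 /share_edge_UPath_ZPath t4.
exists uy; last exact: intersects_row_UPath.
suff : in_pair uy y1 y1' \/ uy = c by rewrite !inE => -[[->|->]|->]; rewrite eqxx ?orbT.
have [|out] := classic (in_pair uy y1 y1'); first by left.
exact/hc/(two_columns_pigeonhole cols out t1 t2 t3 t4).
Qed.

Theorem lemma10 (V : finType) (adj : rel V) (P : V -> path2) (X : {set V}) :
  simple_graph adj -> B2EPG_rep adj P -> is_clique adj X ->
  (exists rows : seq int, (size rows <= 3)%N /\
     forall u, u \in X -> is_Upath (P u) ->
       exists2 r, r \in rows & intersects_row (P u) r)
  \/
  (exists cols : seq int, (size cols <= 3)%N /\
     forall u, u \in X -> is_Zpath (P u) ->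
       exists2 c, c \in cols & intersects_col (P u) c).
Proof.
move=> _ [valid rep] clique.
have share u v : u \in X -> v \in X -> u != v -> share_edge (P u) (P v).
  by move=> uX vX uv; apply/(rep u v uv)/clique.
have [[cols [small cover]]|] :=
  few_values_or_four_distinct [pred z | (z \in X) && is_Zpath (P z)] (zcol \o P).
  right; exists cols; split=> // u uX uZ; exists (zcol (P u)).
    by apply: cover; rewrite /= uX.
  exact: intersects_col_zcol.
case=> z1 [z2 [z3 [z4 [/andP[X1 Z1] /andP[X2 Z2] /andP[X3 Z3] /andP[X4 Z4] cols]]]].
have /= := @map_uniq _ _ (zcol \o P) [:: z1; z2; z3; z4] cols.
rewrite !inE !negb_or => /and4P[/and3P[ne12 ne13 ne14] _ _ _].
have [rows [small cover]] := rows_meeting_four_ZPaths Z1 Z2 Z3 Z4 cols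
  (share _ _ X1 X2 ne12) (share _ _ X1 X3 ne13) (share _ _ X1 X4 ne14).
left; exists rows; split=> // u uX uU.
have neZ z : is_Zpath (P z) -> u != z by move=> zZ; apply: contraTneq uU => ->; case: (P z) zZ.
by apply: cover => //; apply: share => //; apply: neZ.
Qed.
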